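(* Let $n\ge 2$, $p=n(n+1)$, let $\beta$ be as below, and define $$a(x)=\frac{p}{2}\Big(\big(\tfrac{1+x}{2}\big)^{p-1}+\beta(x)\big(\tfrac{1-x}{2}\big)^{p-1}\Big)\frac{1}{L_n'(x)},\qquad x\in[z_p,1).$$ Then $a$ is strictly decreasing on $[z_p,1)$ (and $a(x)L_n$ is tangent to $h_{\beta(x)^{1/p}}$ at $x$, with $a(x)\to1$ as $x\to1$).
   Context: $L_n(s)=\frac{1}{2^nn!}\frac{d^n}{ds^n}(s^2-1)^n$; $z_p$ is the largest zero of $L_n$ in $(-1,1)$; $\beta(x)=\frac{(1+x)^pL_n'(x)-p(1+x)^{p-1}L_n(x)}{(1-x)^pL_n'(x)+p(1-x)^{p-1}L_n(x)}$; $h_c(s)=\big(\frac{1+s}{2}\big)^p-c^p\big(\frac{1-s}{2}\big)^p$. *)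

From Stdlib Require Import Reals Lra List Factorial.
Import ListNotations.
Open Scope R_scope.

(* Polynomials as coefficient lists [a0; a1; ...] (lowest degree first). *)
Fixpoint padd (p q : list R) : list R :=
  match p, q with
  | nil, _ => q
  | _, nil => p
  | a :: p', b :: q' => (a + b) :: padd p' q'
  end.

Definition pscale (c : R) (p : list R) : list R := map (fun a => c * a) p.

Fixpoint pmul (p q : list R) : list R :=
  match p with
  | nil => nil
  | a :: p' => padd (pscale a q) (0 :: pmul p' q)
  end.

Fixpoint ppow (p : list R) (n : nat) : list R :=
  match n with
  | O => [1]
  | S m => pmul p (ppow p m)
  end.

Fixpoint pderiv_aux (k : nat) (l : list R) : list R :=
  match l with
  | nil => nil
  | a :: l' => (INR k * a) :: pderiv_aux (S k) l'
  end.

Definition pderiv (l : list R) : list R :=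
  match l with
  | nil => nil
  | _ :: l' => pderiv_aux 1 l'
  end.

Definition peval (l : list R) (x : R) : R :=
  fold_right (fun a acc => a + x * acc) 0 l.

Definition rodrigues_base (n : nat) : list R := ppow [-1; 0; 1] n.

(* Legendre polynomial via Rodrigues' formula:
   L_n(s) = 1/(2^n n!) d^n/ds^n (s^2-1)^n *)
Definition Legendre (n : nat) (s : R) : R :=
  / (2 ^ n * INR (Factorial.fact n)) * peval (Nat.iter n pderiv (rodrigues_base n)) s.

Definition Legendre' (n : nat) (s : R) : R :=
  / (2 ^ n * INR (Factorial.fact n)) * peval (Nat.iter (S n) pderiv (rodrigues_base n)) s.

Definition beta (n p : nat) (x : R) : R :=
  ((1 + x) ^ p * Legendre' n x - INR p * (1 + x) ^ (p - 1) * Legendre n x) /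
  ((1 - x) ^ p * Legendre' n x + INR p * (1 - x) ^ (p - 1) * Legendre n x).

Definition hfun (p : nat) (c s : R) : R :=
  ((1 + s) / 2) ^ p - c ^ p * ((1 - s) / 2) ^ p.

Definition afun (n p : nat) (x : R) : R :=
  INR p / 2 * (((1 + x) / 2) ^ (p - 1) + beta n p x * ((1 - x) / 2) ^ (p - 1))
  / Legendre' n x.

Definition largest_zero_in_interval (n : nat) (z : R) : Prop :=
  -1 < z < 1 /\ Legendre n z = 0 /\
  (forall y, -1 < y < 1 -> Legendre n y = 0 -> y <= z).

(* With [p = n(n+1)] Legendre's equation [(1 - x^2) L'' - 2 x L' + p L = 0] simplifies
   [a] to [p ((1+x)/2)^(p-1) / ((1-x) L' + p L)], whose derivative is
   [-(p^2/2) ((1+x)/2)^(p-2) (1-x^2) L'' / ((1-x) L' + p L)^2].  To the right of the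
   largest zero [z] of [L] one has [L >= 0] and [L', L'' > 0]: differentiating the
   equation [k] times shows that [(1-x^2)^(k+1) L^(k+1)] has derivative
   [-(p - k(k+1)) (1-x^2)^k L^(k)], so it decreases to its value [0] at [x = 1].
   Hence [a] decreases; tangency is algebra, and [a -> 1] because [L(1) = 1]. *)

From Stdlib Require Import Reals Lra Lia List Factorial.
Import ListNotations.
Open Scope R_scope.

Lemma peval_padd p q x : peval (padd p q) x = peval p x + peval q x.
Proof.
  revert q; induction p as [|a p IH]; intros [|b q]; simpl; try ring.
  rewrite IH; ring.
Qed.

Lemma peval_pscale c p x : peval (pscale c p) x = c * peval p x.
Proof. induction p as [|a p IH]; simpl; [ring | rewrite IH; ring]. Qed.

Lemma peval_pmul p q x : peval (pmul p q) x = peval p x * peval q x.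
Proof.
  induction p as [|a p IH]; simpl; [ring|].
  rewrite peval_padd, peval_pscale; simpl; rewrite IH; ring.
Qed.

Lemma peval_ppow p m x : peval (ppow p m) x = peval p x ^ m.
Proof. induction m as [|m IH]; simpl; [ring | rewrite peval_pmul, IH; ring]. Qed.

Lemma peval_pderiv_aux l : forall k x,
  peval (pderiv_aux k l) x = INR k * peval l x + x * peval (pderiv l) x.
Proof.
  induction l as [|a l IH]; intros k x; simpl; [ring|].
  rewrite IH, (IH 1%nat), S_INR; simpl; ring.
Qed.

Lemma derive_eq f x l l' : derivable_pt_lim f x l -> l = l' -> derivable_pt_lim f x l'.
Proof. now intros H <-. Qed.

Lemma derive_ext f g x l :
  (forall y, f y = g y) -> derivable_pt_lim f x l -> derivable_pt_lim g x l.
Proof.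
  intros E H eps Heps; destruct (H eps Heps) as [d Hd]; exists d; intros h Hh Hhd.
  rewrite <- !E; auto.
Qed.

Lemma derive_ext_unique f g x l l' :
  (forall y, f y = g y) -> derivable_pt_lim f x l -> derivable_pt_lim g x l' -> l = l'.
Proof.
  intros E Hf Hg; apply (uniqueness_limite g x); [apply (derive_ext f) |]; auto.
Qed.

Lemma derive_const a x : derivable_pt_lim (fun _ => a) x 0.
Proof. apply derivable_pt_lim_const. Qed.

Lemma derive_id x : derivable_pt_lim (fun y => y) x 1.
Proof. apply derivable_pt_lim_id. Qed.

Lemma derive_plus f g x l1 l2 : derivable_pt_lim f x l1 -> derivable_pt_lim g x l2 ->
  derivable_pt_lim (fun y => f y + g y) x (l1 + l2).
Proof. apply derivable_pt_lim_plus. Qed.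

Lemma derive_minus f g x l1 l2 : derivable_pt_lim f x l1 -> derivable_pt_lim g x l2 ->
  derivable_pt_lim (fun y => f y - g y) x (l1 - l2).
Proof. apply derivable_pt_lim_minus. Qed.

Lemma derive_mult f g x l1 l2 : derivable_pt_lim f x l1 -> derivable_pt_lim g x l2 ->
  derivable_pt_lim (fun y => f y * g y) x (l1 * g x + f x * l2).
Proof. apply derivable_pt_lim_mult. Qed.

Lemma derive_div f g x l1 l2 :
  derivable_pt_lim f x l1 -> derivable_pt_lim g x l2 -> g x <> 0 ->
  derivable_pt_lim (fun y => f y / g y) x ((l1 * g x - l2 * f x) / (g x)²).
Proof. apply derivable_pt_lim_div. Qed.

Lemma derive_pow f x l m : derivable_pt_lim f x l ->
  derivable_pt_lim (fun y => f y ^ m) x (INR m * f x ^ pred m * l).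
Proof.
  intros H; apply (derivable_pt_lim_comp f (fun y => y ^ m)); auto.
  apply derivable_pt_lim_pow.
Qed.

(* [derive_minus] must be tried before [derive_plus], which would otherwise unfold
   [x - y] into [x + - y]. *)
Ltac derive :=
  repeat first
    [ apply derive_const | apply derive_id
    | match goal with H : context [derivable_pt_lim] |- _ => apply H end
    | apply derive_pow | apply derive_minus | apply derive_plus | apply derive_mult ].

Lemma derivable_pt_lim_peval l x : derivable_pt_lim (peval l) x (peval (pderiv l) x).
Proof.
  revert x; induction l as [|a l IH]; intros x.
  - apply (derive_const 0 x).
  - change (peval (a :: l)) with (fun y => a + y * peval l y).
    eapply derive_eq; [derive|].
    simpl; rewrite peval_pderiv_aux; simpl; ring.
Qed.

Lemma peval_iter_pderiv_at_root m : forall l q,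
  (forall y, peval l y = (y - 1) ^ m * peval q y) ->
  peval (Nat.iter m pderiv l) 1 = INR (fact m) * peval q 1.
Proof.
  induction m as [|m IH]; intros l q E.
  - simpl; rewrite E; simpl; ring.
  - (* [((y-1)^(m+1) q)' = (y-1)^m ((m+1) q + (y-1) q')] *)
    rewrite Nat.iter_succ_r.
    rewrite (IH _ (padd (pscale (INR (S m)) q) (pmul [-1; 1] (pderiv q)))).
    + rewrite peval_padd, peval_pscale, peval_pmul.
      change (fact (S m)) with (S m * fact m)%nat; rewrite mult_INR; simpl; ring.
    + intros y. apply (derive_ext_unique _ _ y _ _ E);
        [apply derivable_pt_lim_peval |].
      eapply derive_eq; [derive; apply derivable_pt_lim_peval |].
      rewrite peval_padd, peval_pscale, peval_pmul, S_INR; simpl; ring.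
Qed.

Definition rodrigues_deriv (n k : nat) : R -> R :=
  peval (Nat.iter k pderiv (rodrigues_base n)).

Lemma derivable_pt_lim_rodrigues_deriv n k x :
  derivable_pt_lim (rodrigues_deriv n k) x (rodrigues_deriv n (S k) x).
Proof. apply derivable_pt_lim_peval. Qed.

Lemma rodrigues_deriv_0 n x : rodrigues_deriv n 0 x = (x ^ 2 - 1) ^ n.
Proof.
  unfold rodrigues_deriv, rodrigues_base; simpl Nat.iter.
  rewrite peval_ppow; f_equal; simpl; ring.
Qed.

Lemma rodrigues_deriv_1 n x :
  (x ^ 2 - 1) * rodrigues_deriv n 1 x = 2 * INR n * x * rodrigues_deriv n 0 x.
Proof.
  rewrite (derive_ext_unique _ _ x _ _ (rodrigues_deriv_0 n)
             (derivable_pt_lim_rodrigues_deriv n 0 x) ltac:(derive)), rodrigues_deriv_0.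
  destruct n as [|n]; simpl; ring.
Qed.

(* Differentiating [(x^2 - 1) f' = 2 n x f], with [f = (x^2 - 1)^n], [k + 1] times. *)
Lemma rodrigues_deriv_ode n k x :
  (x ^ 2 - 1) * rodrigues_deriv n (S (S k)) x
  + 2 * (INR k + 1 - INR n) * x * rodrigues_deriv n (S k) x
  + (INR k + 1) * (INR k - 2 * INR n) * rodrigues_deriv n k x = 0.
Proof.
  pose proof (derivable_pt_lim_rodrigues_deriv n) as D.
  revert x; induction k as [|k IH]; intros x.
  - assert (E : forall y, (y ^ 2 - 1) * rodrigues_deriv n 1 y
                          - 2 * INR n * y * rodrigues_deriv n 0 y = 0)
      by (intros y; rewrite rodrigues_deriv_1; ring).
    pose proof (derive_ext_unique _ _ x _ _ E ltac:(derive) (derive_const 0 x)) as Hl.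
    rewrite <- Hl; simpl; ring.
  - pose proof (derive_ext_unique _ _ x _ _ IH ltac:(derive) (derive_const 0 x)) as Hl.
    rewrite <- Hl, !S_INR; simpl; ring.
Qed.

Lemma rodrigues_deriv_at_1 n : rodrigues_deriv n n 1 = INR (fact n) * 2 ^ n.
Proof.
  unfold rodrigues_deriv; rewrite (peval_iter_pderiv_at_root n _ (ppow [1; 1] n)).
  - rewrite peval_ppow; simpl; repeat f_equal; ring.
  - intros y; unfold rodrigues_base; rewrite !peval_ppow, <- Rpow_mult_distr.
    f_equal; simpl; ring.
Qed.

(* [Legendre n = Legendre_deriv n 0] and [Legendre' n = Legendre_deriv n 1] hold by conversion. *)
Definition Legendre_deriv (n k : nat) (s : R) : R :=
  / (2 ^ n * INR (fact n)) * rodrigues_deriv n (k + n) s.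

Lemma derivable_pt_lim_Legendre_deriv n k x :
  derivable_pt_lim (Legendre_deriv n k) x (Legendre_deriv n (S k) x).
Proof.
  pose proof (derivable_pt_lim_rodrigues_deriv n (k + n)).
  unfold Legendre_deriv; eapply derive_eq; [derive |].
  cbv beta; change (S k + n)%nat with (S (k + n)); ring.
Qed.

Lemma Legendre_deriv_ode n k x :
  (1 - x ^ 2) * Legendre_deriv n (S (S k)) x
  - 2 * (INR k + 1) * x * Legendre_deriv n (S k) x
  = (INR k * (INR k + 1) - INR (n * (n + 1))) * Legendre_deriv n k x.
Proof.
  pose proof (rodrigues_deriv_ode n (k + n) x) as E.
  unfold Legendre_deriv; simpl plus.
  rewrite mult_INR, !plus_INR in *; simpl INR.
  apply Rminus_diag_uniq.
  transitivity (- / (2 ^ n * INR (fact n)) * 0); [rewrite <- E |]; ring.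
Qed.

Lemma Legendre_ode n x :
  INR (n * (n + 1)) * Legendre n x
  = 2 * x * Legendre' n x - (1 - x ^ 2) * Legendre_deriv n 2 x.
Proof.
  pose proof (Legendre_deriv_ode n 0 x) as E; simpl INR in E.
  change (Legendre_deriv n 0 x) with (Legendre n x) in E.
  change (Legendre_deriv n 1 x) with (Legendre' n x) in E; lra.
Qed.

Lemma Legendre_at_1 n : Legendre n 1 = 1.
Proof.
  unfold Legendre; fold (rodrigues_deriv n n 1); rewrite rodrigues_deriv_at_1.
  field; split; [apply INR_fact_neq_0 | apply pow_nonzero; lra].
Qed.

Lemma deriv_neg_decreasing f f' x y : x < y ->
  (forall t, x <= t <= y -> derivable_pt_lim f t (f' t)) ->
  (forall t, x < t < y -> f' t < 0) -> f y < f x.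
Proof.
  intros Hxy Hd Hneg; destruct (MVT_cor2 f f' x y Hxy Hd) as [c [E Hc]].
  specialize (Hneg c Hc); nra.
Qed.

Lemma Legendre_pos_right_of_largest_zero n z :
  largest_zero_in_interval n z -> forall x, z < x < 1 -> 0 < Legendre n x.
Proof.
  intros [Hz [_ Hmax]] x Hx.
  assert (Hcont : continuity (Legendre n)).
  { intros t; apply derivable_continuous_pt.
    exists (Legendre_deriv n 1 t); apply (derivable_pt_lim_Legendre_deriv n 0). }
  destruct (Rtotal_order (Legendre n x) 0) as [Hneg | [Hzero | Hpos]]; auto.
  - destruct (IVT (Legendre n) x 1 Hcont ltac:(lra) Hneg) as [t [Ht Et]];
      [rewrite Legendre_at_1; lra |].
    assert (t <> 1) by (intros ->; rewrite Legendre_at_1 in Et; lra).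
    assert (t <= z) by (apply Hmax; auto; lra); lra.
  - assert (x <= z) by (apply Hmax; auto; lra); lra.
Qed.

Lemma Legendre_deriv_pos_step n k z : -1 < z ->
  INR k * (INR k + 1) < INR (n * (n + 1)) ->
  (forall t, z < t < 1 -> 0 < Legendre_deriv n k t) ->
  forall x, z <= x < 1 -> 0 < Legendre_deriv n (S k) x.
Proof.
  intros Hz Hk Hpos x Hx.
  pose proof (derivable_pt_lim_Legendre_deriv n) as D.
  set (h := fun t => (1 - t ^ 2) ^ S k * Legendre_deriv n (S k) t).
  assert (Hdec : h 1 < h x).
  { apply (deriv_neg_decreasing h
      (fun t => - (INR (n * (n + 1)) - INR k * (INR k + 1)) * (1 - t ^ 2) ^ k
                * Legendre_deriv n k t)); [lra | |].
    - intros t _; eapply derive_eq; [unfold h; derive |].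
      transitivity ((1 - t ^ 2) ^ k * ((1 - t ^ 2) * Legendre_deriv n (S (S k)) t
                     - 2 * (INR k + 1) * t * Legendre_deriv n (S k) t)).
      + rewrite S_INR; simpl; ring.
      + rewrite Legendre_deriv_ode; ring.
    - intros t Ht.
      assert (Hw : 0 < (1 - t ^ 2) ^ k) by (apply pow_lt; nra).
      pose proof (Rmult_lt_0_compat _ _ Hw (Hpos t ltac:(lra))); nra. }
  assert (0 < (1 - x ^ 2) ^ S k) by (apply pow_lt; nra).
  unfold h in Hdec; replace (1 - 1 ^ 2) with 0 in Hdec by ring.
  rewrite pow_ne_zero in Hdec by lia; nra.
Qed.

Lemma pow_div2 a m : (a / 2) ^ m = a ^ m / 2 ^ m.
Proof. unfold Rdiv; rewrite Rpow_mult_distr, pow_inv; reflexivity. Qed.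

Lemma Rpower_inv_pow b m : 0 < b -> (0 < m)%nat -> Rpower b (/ INR m) ^ m = b.
Proof.
  intros Hb Hm; rewrite <- Rpower_pow by (unfold Rpower; apply exp_pos).
  rewrite Rpower_mult, Rinv_l, Rpower_1; auto; apply not_0_INR; lia.
Qed.

Definition tangent_denom (n p : nat) (x : R) : R :=
  (1 - x) * Legendre' n x + INR p * Legendre n x.

Definition afun_closed (n p : nat) (x : R) : R :=
  INR p * ((1 + x) / 2) ^ (p - 1) / tangent_denom n p x.

Lemma beta_eq n p x : (1 <= p)%nat ->
  beta n p x = (1 + x) ^ (p - 1) * ((1 + x) * Legendre' n x - INR p * Legendre n x)
               / ((1 - x) ^ (p - 1) * tangent_denom n p x).
Proof.
  intros Hp; destruct p as [|q]; [lia |].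
  unfold beta, tangent_denom; replace (S q - 1)%nat with q by lia.
  simpl pow; f_equal; ring.
Qed.

Lemma afun_eq n p x : (1 <= p)%nat -> x < 1 -> Legendre' n x <> 0 ->
  tangent_denom n p x <> 0 -> afun n p x = afun_closed n p x.
Proof.
  intros Hp Hx HL' HD; unfold afun, afun_closed; rewrite beta_eq by exact Hp.
  rewrite !pow_div2; unfold tangent_denom in *.
  assert ((1 - x) ^ (p - 1) <> 0) by (apply pow_nonzero; lra).
  assert (2 ^ (p - 1) <> 0) by (apply pow_nonzero; lra).
  field; auto.
Qed.

Lemma derivable_pt_lim_hfun p c s :
  derivable_pt_lim (hfun p c) s
    (INR p / 2 * (((1 + s) / 2) ^ (p - 1) + c ^ p * ((1 - s) / 2) ^ (p - 1))).
Proof.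
  unfold hfun; eapply derive_eq; [derive |].
  rewrite Nat.sub_1_r; cbv beta; field.
Qed.

Lemma afun_Legendre_eq_hfun n p x c : (1 <= p)%nat -> x < 1 ->
  Legendre' n x <> 0 -> tangent_denom n p x <> 0 -> c ^ p = beta n p x ->
  afun n p x * Legendre n x = hfun p c x.
Proof.
  intros Hp Hx HL' HD Hc; rewrite afun_eq by auto.
  unfold hfun, afun_closed; rewrite Hc, beta_eq by exact Hp.
  destruct p as [|q]; [lia |]; replace (S q - 1)%nat with q by lia.
  rewrite !pow_div2; unfold tangent_denom in *.
  assert ((1 - x) ^ q <> 0) by (apply pow_nonzero; lra).
  assert (2 ^ q <> 0) by (apply pow_nonzero; lra).
  simpl pow; field; auto.
Qed.

Lemma afun_Legendre_tangent_hfun n p x c : Legendre' n x <> 0 -> c ^ p = beta n p x ->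
  derivable_pt_lim (fun s => afun n p x * Legendre n s - hfun p c s) x 0.
Proof.
  intros HL' Hc; pose proof (derivable_pt_lim_Legendre_deriv n 0) as D.
  pose proof (derivable_pt_lim_hfun p c) as Dh.
  eapply derive_eq; [derive |].
  rewrite Hc; unfold afun; change (Legendre_deriv n 1 x) with (Legendre' n x).
  field; exact HL'.
Qed.

Section Legendre_tangent_family.

Variable n : nat.
Local Notation p := (n * (n + 1))%nat.

Definition afun_closed_deriv (x : R) : R :=
  - (INR p ^ 2 / 2 * ((1 + x) / 2) ^ (p - 2) * (1 - x ^ 2) * Legendre_deriv n 2 x
     / tangent_denom n p x ^ 2).

Lemma derivable_pt_lim_afun_closed x : (1 <= n)%nat -> tangent_denom n p x <> 0 ->
  derivable_pt_lim (afun_closed n p) x (afun_closed_deriv x).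
Proof.
  intros Hn HD.
  pose proof (derivable_pt_lim_Legendre_deriv n 0) as D0.
  pose proof (derivable_pt_lim_Legendre_deriv n 1) as D1.
  unfold afun_closed; eapply derive_eq.
  { apply derive_div; [derive | unfold tangent_denom; derive | exact HD]. }
  unfold afun_closed_deriv, tangent_denom in *; rewrite Legendre_ode in *.
  change (Legendre_deriv n 1 x) with (Legendre' n x).
  assert (Hp : (2 <= p)%nat) by nia; revert Hp HD; generalize p.
  intros [|[|m]] Hp HD; [lia | lia |].
  replace (S (S m) - 1)%nat with (S m) by lia; replace (S (S m) - 2)%nat with m by lia.
  rewrite !S_INR; cbv beta; simpl pred; simpl pow; unfold Rsqr.
  field; contradict HD; rewrite <- HD; ring.
Qed.

Hypothesis hn : (2 <= n)%nat.
Variable z : R.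
Hypothesis hz : largest_zero_in_interval n z.

Let z_gt_m1 : -1 < z.
Proof. apply hz. Qed.

Let p_gt_2 : 2 < INR p.
Proof.
  replace 2 with (INR 2) by reflexivity; apply lt_INR; nia.
Qed.

Lemma Legendre_nonneg x : z <= x < 1 -> 0 <= Legendre n x.
Proof.
  intros Hx; destruct (Req_dec x z) as [-> | Hxz]; [right; symmetry; apply hz |].
  left; apply (Legendre_pos_right_of_largest_zero n z hz); lra.
Qed.

Lemma Legendre'_pos x : z <= x < 1 -> 0 < Legendre' n x.
Proof.
  apply (Legendre_deriv_pos_step n 0 z z_gt_m1); [simpl; lra |].
  exact (Legendre_pos_right_of_largest_zero n z hz).
Qed.

Lemma Legendre_deriv2_pos x : z <= x < 1 -> 0 < Legendre_deriv n 2 x.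
Proof.
  apply (Legendre_deriv_pos_step n 1 z z_gt_m1); [simpl; lra |].
  intros t Ht; apply Legendre'_pos; lra.
Qed.

Lemma tangent_denom_pos x : z <= x < 1 -> 0 < tangent_denom n p x.
Proof.
  intros Hx; unfold tangent_denom.
  pose proof (Legendre'_pos x Hx); pose proof (Legendre_nonneg x Hx); nra.
Qed.

Lemma beta_pos x : z <= x < 1 -> 0 < beta n p x.
Proof.
  intros Hx; rewrite beta_eq by nia.
  pose proof (Legendre'_pos x Hx); pose proof (Legendre_deriv2_pos x Hx).
  pose proof (tangent_denom_pos x Hx).
  assert (0 < 1 - x ^ 2) by (pose proof z_gt_m1; nra).
  assert (0 < (1 + x) * Legendre' n x - INR p * Legendre n x)
    by (rewrite Legendre_ode; nra).
  apply Rdiv_lt_0_compat; apply Rmult_lt_0_compat; auto; apply pow_lt; lra.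
Qed.

Lemma afun_eq_closed x : z <= x < 1 -> afun n p x = afun_closed n p x.
Proof.
  intros Hx; apply afun_eq; [nia | lra | |];
    [pose proof (Legendre'_pos x Hx) | pose proof (tangent_denom_pos x Hx)]; lra.
Qed.

Lemma afun_closed_deriv_neg t : z < t < 1 -> afun_closed_deriv t < 0.
Proof.
  intros Ht; unfold afun_closed_deriv.
  pose proof (Legendre_deriv2_pos t ltac:(lra)).
  pose proof (tangent_denom_pos t ltac:(lra)).
  assert (0 < INR p ^ 2 / 2) by nra.
  assert (0 < ((1 + t) / 2) ^ (p - 2)) by (apply pow_lt; lra).
  assert (0 < 1 - t ^ 2) by (pose proof z_gt_m1; nra).
  assert (0 < tangent_denom n p t ^ 2) by (apply pow_lt; lra).
  enough (0 < INR p ^ 2 / 2 * ((1 + t) / 2) ^ (p - 2) * (1 - t ^ 2)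
              * Legendre_deriv n 2 t / tangent_denom n p t ^ 2) by lra.
  apply Rdiv_lt_0_compat; [| assumption].
  repeat (apply Rmult_lt_0_compat; [| assumption]); assumption.
Qed.

Lemma afun_decreasing x y : z <= x -> x < y -> y < 1 -> afun n p y < afun n p x.
Proof.
  intros Hx Hxy Hy; rewrite !afun_eq_closed by lra.
  apply (deriv_neg_decreasing _ afun_closed_deriv x y Hxy).
  - intros t Ht; apply derivable_pt_lim_afun_closed; [lia |].
    pose proof (tangent_denom_pos t ltac:(lra)); lra.
  - intros t Ht; apply afun_closed_deriv_neg; lra.
Qed.

Lemma afun_tangent x : z <= x < 1 ->
  let c := Rpower (beta n p x) (/ INR p) in
  afun n p x * Legendre n x = hfun p c x /\
  derivable_pt_lim (fun s => afun n p x * Legendre n s - hfun p c s) x 0.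
Proof.
  intros Hx c.
  assert (Hc : c ^ p = beta n p x) by (apply Rpower_inv_pow; [apply beta_pos | nia]; auto).
  pose proof (Legendre'_pos x Hx); pose proof (tangent_denom_pos x Hx).
  split; [apply afun_Legendre_eq_hfun | apply afun_Legendre_tangent_hfun];
    auto; try lra; nia.
Qed.

Lemma afun_limit_1 : limit1_in (afun n p) (fun x => z <= x < 1) 1 1.
Proof.
  apply (limit1_ext (afun_closed n p)); [intros x Hx; symmetry; apply afun_eq_closed; auto |].
  assert (HD1 : tangent_denom n p 1 = INR p)
    by (unfold tangent_denom; rewrite Legendre_at_1; ring).
  assert (Hcont : continuity_pt (afun_closed n p) 1).
  { apply derivable_continuous_pt; eexists; apply derivable_pt_lim_afun_closed; [lia | lra]. }
  assert (Hval : afun_closed n p 1 = 1).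
  { unfold afun_closed; rewrite HD1; replace ((1 + 1) / 2) with 1 by field.
    rewrite pow1; field; lra. }
  unfold continuity_pt, continue_in in Hcont; rewrite Hval in Hcont.
  apply (limit1_imp _ (D_x no_cond 1)); [intros x Hx; split; [exact I | lra] | exact Hcont].
Qed.

End Legendre_tangent_family.

Theorem lemma5p4 (n : nat) (hn : (2 <= n)%nat) (z : R)
  (hz : largest_zero_in_interval n z) :
  let p := (n * (n + 1))%nat in
  (forall x y, z <= x -> x < y -> y < 1 -> afun n p y < afun n p x) /\
  (forall x, z <= x < 1 ->
     let c := Rpower (beta n p x) (/ INR p) in
     afun n p x * Legendre n x = hfun p c x /\
     derivable_pt_lim (fun s => afun n p x * Legendre n s - hfun p c s) x 0) /\
  limit1_in (afun n p) (fun x => z <= x < 1) 1 1.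
Proof.
  split; [| split].
  - exact (afun_decreasing n hn z hz).
  - exact (afun_tangent n hn z hz).
  - exact (afun_limit_1 n hn z hz).
Qed.
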